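(* Let $(\mathfrak{g},[\cdot,\ldots,\cdot],\varepsilon,\alpha)$ be an $n$-Hom-Lie color algebra and $\mathcal{N}$ a Nijenhuis operator on it. For $\lambda\in\mathbb{K}$ define $$[x_1,\ldots,x_n]_\lambda=[x_1,\ldots,x_n]+\sum_{i=1}^{n-1}\lambda^i[x_1,\ldots,x_n]^i_{\mathcal{N}}.$$ Then this bracket defines a deformation of $\mathfrak{g}$ (i.e. $(\mathfrak{g},[\cdot,\ldots,\cdot]_\lambda,\varepsilon,\alpha)$ is an $n$-Hom-Lie color algebra) which is infinitesimally trivial: $\mathcal{T}_\lambda=\mathrm{id}+\lambda\mathcal{N}$ satisfies $\mathcal{T}_\lambda\circ\alpha=\alpha\circ\mathcal{T}_\lambda$ and $\mathcal{T}_\lambda([x_1,\ldots,x_n]_\lambda)=[\mathcal{T}_\lambda(x_1),\ldots,\mathcal{T}_\lambda(x_n)]$ for all $x_1,\ldots,x_n\in\mathfrak{g}$.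
   Context: $\mathbb{K}$ is a field of characteristic zero and $\Gamma$ an abelian group. A bicharacter is a map $\varepsilon:\Gamma\times\Gamma\to\mathbb{K}\setminus\{0\}$ with $\varepsilon(a,b)\varepsilon(b,a)=1$, $\varepsilon(a,b+c)=\varepsilon(a,b)\varepsilon(a,c)$, $\varepsilon(a+b,c)=\varepsilon(a,c)\varepsilon(b,c)$. For homogeneous $x,y$, $\varepsilon(x,y)=\varepsilon(|x|,|y|)$ and $\varepsilon(x,y_1+\dots+y_k)=\varepsilon(|x|,|y_1|+\dots+|y_k|)$ ($=1$ for an empty sum). An $n$-Hom-Lie color algebra $(\mathfrak{g},[\cdot,\ldots,\cdot],\varepsilon,\alpha)$ is a $\Gamma$-graded vector space with an $n$-linear bracket of degree zero, a bicharacter $\varepsilon$ and a degree-zero linear map $\alpha$ such that for homogeneous elements: (i) $[x_1,\ldots,x_i,x_{i+1},\ldots,x_n]=-\varepsilon(x_i,x_{i+1})[x_1,\ldots,x_{i+1},x_i,\ldots,x_n]$; (ii) $[\alpha(x_1),\ldots,\alpha(x_{n-1}),[y_1,\ldots,y_n]]=\sum_{i=1}^n\varepsilon(x_1+\dots+x_{n-1},y_1+\dots+y_{i-1})[\alpha(y_1),\ldots,\alpha(y_{i-1}),[x_1,\ldots,x_{n-1},y_i],\alpha(y_{i+1}),\ldots,\alpha(y_n)]$. For a degree-zero linear map $\mathcal{N}:\mathfrak{g}\to\mathfrak{g}$ define $[\cdot,\ldots,\cdot]^0_{\mathcal{N}}=[\cdot,\ldots,\cdot]$ and for $1\le j\le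 n-1$: $[x_1,\ldots,x_n]^j_{\mathcal{N}}=\sum_{i_1<\dots<i_j}[x_1,\ldots,\mathcal{N}x_{i_1},\ldots,\mathcal{N}x_{i_j},\ldots,x_n]-\mathcal{N}([x_1,\ldots,x_n]^{j-1}_{\mathcal{N}})$, where the sum applies $\mathcal{N}$ exactly to the entries in positions $i_1,\ldots,i_j$. $\mathcal{N}$ is a Nijenhuis operator if $\mathcal{N}\circ\alpha=\alpha\circ\mathcal{N}$ and $[\mathcal{N}x_1,\ldots,\mathcal{N}x_n]=\mathcal{N}([x_1,\ldots,x_n]^{n-1}_{\mathcal{N}})$ for all $x_i$. *)

From mathcomp Require Import all_boot all_algebra.
Set Implicit Arguments. Unset Strict Implicit. Unset Printing Implicit Defensive.
Import GRing.Theory.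
Local Open Scope ring_scope.

Section NHomLieColor.
Variables (K : fieldType) (Γ : zmodType) (V : lmodType K) (n : nat).

Definition bicharacter (eps : Γ -> Γ -> K) :=
  [/\ forall a b, eps a b != 0,
      forall a b, eps a b * eps b a = 1,
      forall a b c, eps a (b + c) = eps a b * eps a c
    & forall a b c, eps (a + b) c = eps a c * eps b c].

(* G g is the homogeneous component of degree g; V = (+)_g G g *)
Definition graded (G : Γ -> {pred V}) :=
  [/\ forall g, 0 \in G g /\ (forall (a : K) u v, u \in G g -> v \in G g -> a *: u + v \in G g),
      forall v : V, exists (s : seq Γ) (f : Γ -> V),
        [/\ uniq s, forall g, f g \in G g & v = \sum_(g <- s) f g]
    & forall (s : seq Γ) (f : Γ -> V), uniq s -> (forall g, f g \in G g) ->
        \sum_(g <- s) f g = 0 -> forall g, g \in s -> f g = 0].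

Definition degree0 (G : Γ -> {pred V}) (f : V -> V) :=
  forall g v, v \in G g -> f v \in G g.

Definition upd (x : {ffun 'I_n -> V}) (i : 'I_n) (v : V) : {ffun 'I_n -> V} :=
  [ffun k => if k == i then v else x k].

Definition swap (x : {ffun 'I_n -> V}) (i j : 'I_n) : {ffun 'I_n -> V} :=
  [ffun k => if k == i then x j else if k == j then x i else x k].

Definition fmap (f : V -> V) (x : {ffun 'I_n -> V}) : {ffun 'I_n -> V} :=
  [ffun k => f (x k)].

(* [x_1, ..., x_{n-1}, z] *)
Definition catl (x : {ffun 'I_n.-1 -> V}) (z : V) : {ffun 'I_n -> V} :=
  [ffun k : 'I_n => if insub (nat_of_ord k) : option 'I_n.-1 is Some k' then x k' else z].

Definition multilinear (br : {ffun 'I_n -> V} -> V) :=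
  forall (x : {ffun 'I_n -> V}) (i : 'I_n) (a : K) (u v : V),
    br (upd x i (a *: u + v)) = a *: br (upd x i u) + br (upd x i v).

Record nHomLieColor (G : Γ -> {pred V}) (eps : Γ -> Γ -> K)
    (br : {ffun 'I_n -> V} -> V) (alpha : {linear V -> V}) : Prop := {
  hlc_bichar : bicharacter eps;
  hlc_graded : graded G;
  hlc_multilinear : multilinear br;
  hlc_alpha_deg0 : degree0 G alpha;
  hlc_br_deg0 : forall (d : 'I_n -> Γ) (x : {ffun 'I_n -> V}),
      (forall i, x i \in G (d i)) -> br x \in G (\sum_(i < n) d i);
  hlc_skew : forall (d : 'I_n -> Γ) (x : {ffun 'I_n -> V}) (i j : 'I_n),
      (forall k, x k \in G (d k)) -> nat_of_ord j = (nat_of_ord i).+1 ->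
      br x = - (eps (d i) (d j) *: br (swap x i j));
  hlc_jacobi : forall (dx : 'I_n.-1 -> Γ) (dy : 'I_n -> Γ)
           (x : {ffun 'I_n.-1 -> V}) (y : {ffun 'I_n -> V}),
      (forall k, x k \in G (dx k)) -> (forall k, y k \in G (dy k)) ->
      br (catl [ffun k => alpha (x k)] (br y)) =
      \sum_(i < n) eps (\sum_(k < n.-1) dx k) (\sum_(k < n | (k < i)%N) dy k)
         *: br (upd (fmap alpha y) i (br (catl x (y i)))) }.

Definition applyN (N : V -> V) (S : {set 'I_n}) (x : {ffun 'I_n -> V}) : {ffun 'I_n -> V} :=
  [ffun k => if k \in S then N (x k) else x k].

Fixpoint brN (N : V -> V) (br : {ffun 'I_n -> V} -> V) (j : nat) (x : {ffun 'I_n -> V}) : V :=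
  match j with
  | 0 => br x
  | j'.+1 => \sum_(S : {set 'I_n} | #|S| == j'.+1) br (applyN N S x) - N (brN N br j' x)
  end.

Definition Nijenhuis (G : Γ -> {pred V}) (br : {ffun 'I_n -> V} -> V)
    (alpha N : {linear V -> V}) :=
  [/\ degree0 G N,
      forall v, N (alpha v) = alpha (N v)
    & forall x : {ffun 'I_n -> V}, br (fmap N x) = N (brN N br n.-1 x)].

Definition deformed_br (N : V -> V) (br : {ffun 'I_n -> V} -> V) (lambda : K)
    (x : {ffun 'I_n -> V}) : V :=
  br x + \sum_(1 <= i < n) lambda ^+ i *: brN N br i x.

Definition Tl (N : V -> V) (lambda : K) (v : V) : V := v + lambda *: N v.

End NHomLieColor.

(* Multilinearity, degree and color skew-symmetry pass from [br] to every [brN j],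
   hence to the deformed bracket. For the Hom-Jacobi identity, expand
   [br (fmap (Tl N mu) x)] multilinearly and group the terms by the number of slots
   hit by [N]: the layers telescope, the top one by the Nijenhuis condition, into
   [Tl N mu] applied to the deformed bracket. So [Tl N mu] maps the Jacobiator of the
   deformed bracket at [x, y] to the Jacobiator of [br] at the [Tl N mu]-images, which
   vanishes. The deformed Jacobiator is polynomial in [mu], with coefficients [c_l]
   say, and [Tl N mu] turns it into the polynomial with coefficients
   [c_l + N c_(l-1)]; in characteristic zero a polynomial function vanishing
   everywhere has zero coefficients, so all [c_l] vanish. *)

From HB Require Import structures.
From mathcomp Require Import all_boot all_algebra perm ring.
Set Implicit Arguments. Unset Strict Implicit. Unset Printing Implicit Defensive.
Import GRing.Theory.
Local Open Scope ring_scope.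

Section PolynomialFunctions.
Variables (K : fieldType) (V : lmodType K).

Definition polyfun (F : K -> V) :=
  exists d (c : nat -> V), forall mu, F mu = \sum_(l < d) mu ^+ l *: c l.

Lemma polyfun_ext F1 F2 : F1 =1 F2 -> polyfun F1 -> polyfun F2.
Proof. by move=> E [d [c H]]; exists d, c => mu; rewrite -E. Qed.

Lemma sum_coef_widen d d' (c : nat -> V) mu : (d <= d')%N ->
  \sum_(l < d) mu ^+ l *: c l =
  \sum_(l < d') mu ^+ l *: (if (l < d)%N then c l else 0).
Proof.
move=> le_dd'; rewrite -(subnKC le_dd') big_split_ord /= [X in _ + X]big1 ?addr0.
  by apply: eq_bigr => l _; rewrite ltn_ord.
by move=> l _; rewrite ltnNge leq_addr scaler0.
Qed.

Lemma polyfun_cst v : polyfun (fun _ => v).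
Proof. by exists 1%N, (fun _ => v) => mu; rewrite big_ord1 expr0 scale1r. Qed.

Lemma polyfunD F1 F2 : polyfun F1 -> polyfun F2 -> polyfun (F1 \+ F2).
Proof.
move=> [d1 [c1 H1]] [d2 [c2 H2]]; pose d := maxn d1 d2.
exists d, (fun l => (if (l < d1)%N then c1 l else 0) + (if (l < d2)%N then c2 l else 0)).
move=> mu; rewrite /= H1 H2 (@sum_coef_widen d1 d) ?leq_maxl //.
rewrite (@sum_coef_widen d2 d) ?leq_maxr // -big_split.
by apply: eq_bigr => l _; rewrite scalerDr.
Qed.

Lemma polyfunZ a F : polyfun F -> polyfun (fun mu => a *: F mu).
Proof.
move=> [d [c H]]; exists d, (fun l => a *: c l) => mu.
by rewrite H scaler_sumr; apply: eq_bigr => l _; rewrite !scalerA mulrC.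
Qed.

Lemma polyfunB F1 F2 : polyfun F1 -> polyfun F2 -> polyfun (F1 \- F2).
Proof.
move=> P1 P2; apply: polyfun_ext (polyfunD P1 (polyfunZ (-1) P2)) => mu.
by rewrite /= scaleN1r.
Qed.

Lemma polyfun_sum (I : Type) (r : seq I) (P : pred I) (F : I -> K -> V) :
  (forall i, polyfun (F i)) -> polyfun (fun mu => \sum_(i <- r | P i) F i mu).
Proof.
move=> PF; elim: r => [|i r IHr].
  by apply: polyfun_ext (polyfun_cst 0) => mu; rewrite big_nil.
rewrite /=; case Pi: (P i).
  by apply: polyfun_ext (polyfunD (PF i) IHr) => mu; rewrite big_cons Pi.
by apply: polyfun_ext IHr => mu; rewrite big_cons Pi.
Qed.

Lemma scale_sum_coef mu d (c : nat -> V) :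
  mu *: \sum_(l < d) mu ^+ l *: c l =
  \sum_(l < d.+1) mu ^+ l *: (if nat_of_ord l is l'.+1 then c l' else 0).
Proof.
rewrite big_ord_recl scaler0 add0r scaler_sumr.
by apply: eq_bigr => l _; rewrite scalerA -exprS.
Qed.

Lemma polyfun_mulXn i F : polyfun F -> polyfun (fun mu => mu ^+ i *: F mu).
Proof.
elim: i => [|i IHi] PF.
  by apply: polyfun_ext PF => mu; rewrite expr0 scale1r.
have [d [c H]] := IHi PF.
exists d.+1, (fun l => if l is l'.+1 then c l' else 0) => mu.
by rewrite exprS -scalerA H scale_sum_coef.
Qed.

Hypothesis char0 : [pchar K] =i pred0.

Lemma subr_exp2_neq0 l d : (l < d)%N -> (2 : K) ^+ l - 2 ^+ d != 0.
Proof.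
move=> lt_ld; rewrite -opprB oppr_eq0 -!natrX -natrB; last by rewrite leq_exp2l // ltnW.
by rewrite ((pcharf0P _).1 char0) subn_eq0 -ltnNge ltn_exp2l.
Qed.

(* Subtracting [2 ^+ d] times the identity at [mu] from the identity at [2 * mu] kills
   the top coefficient and rescales the others by the nonzero [2 ^+ l - 2 ^+ d]. *)
Lemma sum_coef_eq0 d (c : nat -> V) :
  (forall mu : K, \sum_(l < d) mu ^+ l *: c l = 0) -> forall l, (l < d)%N -> c l = 0.
Proof.
elim: d c => [//|d IHd] c F0.
have low l : (l < d)%N -> c l = 0.
  move=> lt_ld; apply: (scalerI (subr_exp2_neq0 lt_ld)).
  rewrite scaler0; apply: (IHd (fun l => (2 ^+ l - 2 ^+ d) *: c l)) lt_ld => mu.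
  have E : \sum_(k < d.+1) mu ^+ k *: ((2 ^+ k - 2 ^+ d) *: c k) = 0.
    rewrite (eq_bigr (fun k : 'I_d.+1 => (2 * mu) ^+ k *: c k - 2 ^+ d *: (mu ^+ k *: c k))).
      by rewrite sumrB -scaler_sumr !F0 scaler0 subr0.
    by move=> k _; rewrite !scalerA -scalerBl exprMn; congr (_ *: _); ring.
  by move: E; rewrite big_ord_recr /= subrr scale0r scaler0 addr0.
have top : c d = 0.
  have := F0 1; rewrite big_ord_recr /= big1 ?add0r ?expr1n ?scale1r //.
  by move=> l _; rewrite low ?scaler0.
by move=> l; rewrite ltnS leq_eqVlt => /predU1P [->|/low].
Qed.

End PolynomialFunctions.

Section DeformationMap.
Variables (K : fieldType) (V : lmodType K) (N : {linear V -> V}).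

Lemma Tl_is_linear mu : linear (Tl N mu).
Proof.
by move=> a u v; rewrite /Tl linearP scalerDr scalerA mulrC -scalerA addrACA -scalerDr.
Qed.

HB.instance Definition _ mu := GRing.isLinear.Build K V V *:%R (Tl N mu) (Tl_is_linear mu).

Hypothesis char0 : [pchar K] =i pred0.

Lemma Tl_polyfun_eq0 F : polyfun F -> (forall mu, Tl N mu (F mu) = 0) -> F =1 fun=> 0.
Proof.
move=> [d [c Fc]] TF0; pose c' l := if (l < d)%N then c l else 0.
have {}Fc mu : F mu = \sum_(l < d.+1) mu ^+ l *: c' l.
  by rewrite Fc (@sum_coef_widen _ _ d d.+1).
pose e l := c' l + (if l is l'.+1 then N (c' l') else 0).
have e0 : forall l, (l < d.+2)%N -> e l = 0.
  apply: (sum_coef_eq0 char0) => mu; under eq_bigr do rewrite scalerDr.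
  rewrite -[RHS](TF0 mu) Fc /Tl linear_sum.
  under [X in _ + _ *: X]eq_bigr do rewrite linearZZ.
  rewrite (scale_sum_coef mu d.+1 (fun l => N (c' l))) big_split /=.
  by rewrite [X in X + _]big_ord_recr /= {2}/c' ltnNge leqnSn scaler0 addr0.
have c'0 l : c' l = 0.
  elim: l => [|l IHl]; first by have := e0 0%N isT; rewrite /e addr0.
  rewrite /c'; case: ifP => // lt_ld.
  by have := e0 l.+1 (leqW (leqW lt_ld)); rewrite /e IHl linear0 addr0 /c' lt_ld.
by move=> mu; rewrite Fc big1 // => l _; rewrite c'0 scaler0.
Qed.

End DeformationMap.

Section Multilinear.
Variables (K : fieldType) (V : lmodType K) (n : nat).
Implicit Types (x : {ffun 'I_n -> V}) (B : {ffun 'I_n -> V} -> V).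

Lemma upd_id x i : upd x i (x i) = x.
Proof. by apply/ffunP => k; rewrite ffunE; case: eqP => // ->. Qed.

Section OneMap.
Variables (B : {ffun 'I_n -> V} -> V) (B_ml : multilinear B).

Lemma mlin_updD x i u v : B (upd x i (u + v)) = B (upd x i u) + B (upd x i v).
Proof. by rewrite -{1}(scale1r u) B_ml scale1r. Qed.

Lemma mlin_upd0 x i : B (upd x i 0) = 0.
Proof. by apply: (addrI (B (upd x i 0))); rewrite -mlin_updD !addr0. Qed.

Lemma mlin_updZ x i a u : B (upd x i (a *: u)) = a *: B (upd x i u).
Proof. by rewrite -[a *: u]addr0 B_ml mlin_upd0 addr0. Qed.

Lemma mlin_upd_sum x i d (F : 'I_d -> V) :
  B (upd x i (\sum_(l < d) F l)) = \sum_(l < d) B (upd x i (F l)).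
Proof.
elim: d F => [|d IHd] F; first by rewrite !big_ord0 mlin_upd0.
by rewrite !big_ord_recr /= mlin_updD IHd.
Qed.

Lemma polyfun_mlin_upd x i (F : K -> V) : polyfun F -> polyfun (fun mu => B (upd x i (F mu))).
Proof.
move=> [d [c Fc]]; exists d, (fun l => B (upd x i (c l))) => mu.
by rewrite Fc mlin_upd_sum; apply: eq_bigr => l _; rewrite mlin_updZ.
Qed.

End OneMap.

Lemma multilinear_comp (f : {linear V -> V}) B : multilinear B -> multilinear (f \o B).
Proof. by move=> B_ml x i a u v; rewrite /= B_ml linearP. Qed.

Lemma multilinearD B1 B2 : multilinear B1 -> multilinear B2 -> multilinear (B1 \+ B2).
Proof. by move=> ml1 ml2 x i a u v; rewrite /= ml1 ml2 scalerDr addrACA. Qed.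

Lemma multilinearZ c B : multilinear B -> multilinear (fun x => c *: B x).
Proof. by move=> B_ml x i a u v; rewrite B_ml scalerDr !scalerA mulrC. Qed.

Lemma multilinearB B1 B2 : multilinear B1 -> multilinear B2 -> multilinear (B1 \- B2).
Proof. by move=> ml1 ml2 x i a u v; rewrite /= ml1 ml2 scalerBr opprD addrACA. Qed.

Lemma multilinear_sum (I : Type) (r : seq I) (P : pred I) (F : I -> {ffun 'I_n -> V} -> V) :
  (forall j, multilinear (F j)) -> multilinear (fun x => \sum_(j <- r | P j) F j x).
Proof.
move=> F_ml; elim: r => [|j r IHr] x i a u v; first by rewrite !big_nil scaler0 addr0.
by rewrite !big_cons; case: (P j); [apply: (multilinearD (F_ml j) IHr) | apply: IHr].
Qed.

Variable N : {linear V -> V}.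

Lemma applyN_upd S x i w :
  applyN N S (upd x i w) = upd (applyN N S x) i (if i \in S then N w else w).
Proof. by apply/ffunP => k; rewrite !ffunE; case: eqVneq => // ->. Qed.

Lemma multilinear_applyN S B : multilinear B -> multilinear (B \o applyN N S).
Proof.
by move=> B_ml x i a u v; rewrite /= !applyN_upd; case: (i \in S); rewrite ?linearP B_ml.
Qed.

Variables (br : {ffun 'I_n -> V} -> V) (br_ml : multilinear br).

Lemma multilinear_brN j : multilinear (brN N br j).
Proof.
elim: j => [//|j IHj]; apply: multilinearB; last exact: multilinear_comp.
by apply: multilinear_sum => S; apply: multilinear_applyN.
Qed.

Lemma multilinear_deformed_br lambda : multilinear (deformed_br N br lambda).
Proof.
apply: multilinearD => //; apply: multilinear_sum => j.
by apply: multilinearZ; apply: multilinear_brN.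
Qed.

Lemma polyfun_deformed_br_upd x i (F : K -> V) :
  polyfun F -> polyfun (fun mu => deformed_br N br mu (upd x i (F mu))).
Proof.
move=> PF; apply: polyfunD; first exact: polyfun_mlin_upd.
apply: polyfun_sum => j; apply: polyfun_mulXn.
by apply: polyfun_mlin_upd => //; apply: multilinear_brN.
Qed.

End Multilinear.

Lemma sum_subsetU1 (R : nmodType) (T : finType) (i : T) (A : {set T}) (F : {set T} -> R) :
  i \notin A ->
  \sum_(S : {set T} | S \subset i |: A) F S =
  \sum_(S : {set T} | S \subset A) F (i |: S) + \sum_(S : {set T} | S \subset A) F S.
Proof.
move=> iNA; rewrite (bigID [pred S : {set T} | i \in S]) /=; congr (_ + _); last first.
  by apply: eq_bigl => S; rewrite -subsetD1 setU1K.
rewrite (reindex_onto (fun S => i |: S) (fun S => S :\ i)) /=; last first.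
  by move=> S /andP [_ iS]; rewrite setD1K.
apply: eq_bigl => S; rewrite setU11 andbT; case iS: (i \in S).
  have -> : (S \subset A) = false by apply: contraNF iNA => /subsetP; apply.
  by case: eqP => [E|]; rewrite ?andbF //; move: iS; rewrite -E setD11.
rewrite setU1K ?iS // eqxx andbT subUset sub1set setU11 /=.
by rewrite -[in RHS](setU1K iNA) subsetD1 iS andbT.
Qed.

Section Expansion.
Variables (K : fieldType) (V : lmodType K) (n : nat).
Implicit Types (x y z : {ffun 'I_n -> V}) (S : {set 'I_n}).

Definition splice S x z : {ffun 'I_n -> V} := [ffun k => if k \in S then z k else x k].

Lemma splice_setU1 S x z i : splice (i |: S) x z = upd (splice S x z) i (z i).
Proof. by apply/ffunP => k; rewrite !ffunE in_setU1; case: eqVneq => // ->. Qed.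

Lemma upd_splice S x z i w : i \notin S -> upd (splice S x z) i w = splice S (upd x i w) z.
Proof.
move=> iNS; apply/ffunP => k; rewrite !ffunE.
by case: eqVneq => // ->; rewrite (negbTE iNS).
Qed.

Variables (B : {ffun 'I_n -> V} -> V) (B_ml : multilinear B).

Lemma mlin_splice_expand (a : K) y (A : {set 'I_n}) x z :
  {in A, forall k, z k = x k + a *: y k} ->
  B (splice A x z) = \sum_(S : {set 'I_n} | S \subset A) a ^+ #|S| *: B (splice S x y).
Proof.
elim: {A}#|A| {-2}A (erefl #|A|) x => [|m IHm] A cardA x zE.
  move/eqP: cardA; rewrite cards_eq0 => /eqP A0; rewrite A0 (big_pred1 set0); last first.
    by move=> S; rewrite subset0.
  by rewrite cards0 scale1r; congr B; apply/ffunP => k; rewrite !ffunE in_set0.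
have [i iA] : exists i, i \in A by apply/set0Pn; rewrite -card_gt0 cardA.
move: zE cardA; rewrite -(setD1K iA); set A' := A :\ i => zE cardA.
have iNA' : i \notin A' by rewrite setD11.
have cardA' : #|A'| = m by move: cardA; rewrite cardsU1 iNA' add1n => -[].
rewrite sum_subsetU1 // splice_setU1 zE ?setU11 // addrC B_ml !upd_splice // upd_id.
rewrite (IHm _ cardA' x); last by move=> k kA'; rewrite zE ?setU1r.
rewrite (IHm _ cardA' (upd x i (y i))); last first.
  move=> k kA'; rewrite zE ?setU1r // ffunE.
  by case: eqVneq kA' => // ->; rewrite (negbTE iNA').
rewrite scaler_sumr; congr (_ + _); apply: eq_bigr => S SA'.
have iNS : i \notin S by apply: contraNN iNA' => /(subsetP SA').
by rewrite scalerA -exprS cardsU1 iNS splice_setU1 upd_splice.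
Qed.

End Expansion.

Section Triviality.
Variables (K : fieldType) (V : lmodType K) (n : nat).
Variables (N : {linear V -> V}) (br : {ffun 'I_n -> V} -> V) (br_ml : multilinear br).

Lemma card_set_ord_le (S : {set 'I_n}) : (#|S| <= n)%N.
Proof. by rewrite -[leqRHS]card_ord max_card. Qed.

Lemma sum_scale_by_card (F : {set 'I_n} -> V) (a : K) :
  \sum_(S : {set 'I_n}) a ^+ #|S| *: F S =
  \sum_(j < n.+1) a ^+ j *: \sum_(S : {set 'I_n} | #|S| == j) F S.
Proof.
have cardS (S : {set 'I_n}) : (#|S| < n.+1)%N by rewrite ltnS card_set_ord_le.
rewrite (partition_big (fun S => Ordinal (cardS S)) xpredT) //=.
apply: eq_bigr => j _; rewrite scaler_sumr; apply: eq_big => S.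
  by apply/eqP/eqP => [<-|/= cardSj]; last apply: val_inj.
by move=> /eqP <-.
Qed.

Lemma br_fmap_Tl lam x :
  br (fmap (Tl N lam) x) =
  \sum_(j < n.+1) lam ^+ j *: \sum_(S : {set 'I_n} | #|S| == j) br (applyN N S x).
Proof.
have -> : fmap (Tl N lam) x = splice setT x (fmap (Tl N lam) x).
  by apply/ffunP => k; rewrite !ffunE in_setT.
rewrite (mlin_splice_expand br_ml (a := lam) (y := fmap N x)); last first.
  by move=> k _; rewrite !ffunE.
rewrite -sum_scale_by_card; apply: eq_big => [S|S _]; first by rewrite subsetT.
by congr (_ *: br _); apply/ffunP => k; rewrite !ffunE.
Qed.

Hypotheses (n_gt0 : (0 < n)%N) (N_nijenhuis : forall x, br (fmap N x) = N (brN N br n.-1 x)).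

Lemma deformed_br_trivial lam x :
  Tl N lam (deformed_br N br lam x) = br (fmap (Tl N lam) x).
Proof.
(* Padding [b] with zeros makes every layer [j <= n] read [b j + N (b j.-1)]. *)
pose b j := if (j < n)%N then brN N br j x else 0.
have sum_b : deformed_br N br lam x = \sum_(j < n) lam ^+ j *: b j.
  rewrite /deformed_br -(big_mkord xpredT (fun j => lam ^+ j *: b j)) (big_ltn n_gt0).
  by rewrite /b n_gt0 scale1r; congr (_ + _); apply: eq_big_nat => j /andP [_ ->].
have layer j : (j < n.+1)%N ->
    \sum_(S : {set 'I_n} | #|S| == j) br (applyN N S x) =
    b j + (if j is j'.+1 then N (b j') else 0).
  case: j => [_|j]; rewrite /b.
    rewrite n_gt0 addr0 (big_pred1 set0) => [|S]; last by rewrite cards_eq0.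
    by congr br; apply/ffunP => k; rewrite !ffunE in_set0.
  have [lt_jn _|lt_nj|eq_jn _] := ltngtP j.+1 n.
  - by rewrite /= subrK.
  - by rewrite ltnS leqNgt lt_nj.
  have -> : j = n.-1 by rewrite -eq_jn.
  rewrite add0r -N_nijenhuis (big_pred1 setT) => [|S].
    by congr br; apply/ffunP => k; rewrite !ffunE in_setT.
  by rewrite prednK // /= eqEcard subsetT cardsT card_ord eqn_leq card_set_ord_le.
rewrite br_fmap_Tl sum_b /Tl linear_sum scaler_sumr.
under [in RHS]eq_bigr => j _ do rewrite layer // scalerDr.
rewrite big_split big_ord_recr /= /b ltnn scaler0 addr0; congr (_ + _).
rewrite -scale_sum_coef scaler_sumr; apply: eq_bigr => j _.
by rewrite linearZZ.
Qed.

End Triviality.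

Section Grading.
Variables (K : fieldType) (Γ : zmodType) (V : lmodType K) (n : nat).
Variables (G : Γ -> {pred V}) (N : {linear V -> V}) (br : {ffun 'I_n -> V} -> V).
Hypotheses (G_subspace : forall g, 0 \in G g /\
              (forall (a : K) u v, u \in G g -> v \in G g -> a *: u + v \in G g))
           (N_deg0 : degree0 G N)
           (br_deg0 : forall (d : 'I_n -> Γ) (x : {ffun 'I_n -> V}),
              (forall i, x i \in G (d i)) -> br x \in G (\sum_(i < n) d i)).

Lemma homog0 g : 0 \in G g. Proof. by case: (G_subspace g). Qed.

Lemma homogP g a u v : u \in G g -> v \in G g -> a *: u + v \in G g.
Proof. by case: (G_subspace g) => _; apply. Qed.

Lemma homogD g u v : u \in G g -> v \in G g -> u + v \in G g.
Proof. by rewrite -{2}[u]scale1r; apply: homogP. Qed.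

Lemma homogZ g a u : u \in G g -> a *: u \in G g.
Proof. by move=> Gu; rewrite -[_ *: _]addr0; apply: homogP => //; apply: homog0. Qed.

Lemma homogB g u v : u \in G g -> v \in G g -> u - v \in G g.
Proof. by move=> Gu Gv; rewrite -scaleN1r addrC; apply: homogP. Qed.

Lemma homog_sum g (I : Type) (r : seq I) (P : pred I) (F : I -> V) :
  (forall i, P i -> F i \in G g) -> \sum_(i <- r | P i) F i \in G g.
Proof.
move=> GF; elim: r => [|i r IHr]; first by rewrite big_nil homog0.
by rewrite big_cons; case: ifP => // Pi; apply: homogD => //; apply: GF.
Qed.

Lemma Tl_deg0 lam : degree0 G (Tl N lam).
Proof. by move=> g v Gv; rewrite /Tl addrC; apply: homogP => //; apply: N_deg0. Qed.

Section Homogeneous.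
Variables (d : 'I_n -> Γ) (x : {ffun 'I_n -> V}) (x_homog : forall i, x i \in G (d i)).

Lemma applyN_homog S i : applyN N S x i \in G (d i).
Proof. by rewrite ffunE; case: ifP => _; [apply: N_deg0|]; apply: x_homog. Qed.

Lemma brN_homog j : brN N br j x \in G (\sum_(i < n) d i).
Proof.
elim: j => [|j IHj] /=; first exact: br_deg0.
apply: homogB; last exact: N_deg0.
by apply: homog_sum => S _; apply: br_deg0; apply: applyN_homog.
Qed.

Lemma deformed_br_homog lam : deformed_br N br lam x \in G (\sum_(i < n) d i).
Proof.
apply: homogD; first exact: br_deg0.
by apply: homog_sum => j _; apply: homogZ; apply: brN_homog.
Qed.

End Homogeneous.

Variable eps : Γ -> Γ -> K.
Hypothesis br_skew : forall (d : 'I_n -> Γ) (x : {ffun 'I_n -> V}) (i j : 'I_n),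
  (forall k, x k \in G (d k)) -> nat_of_ord j = (nat_of_ord i).+1 ->
  br x = - (eps (d i) (d j) *: br (swap x i j)).

Lemma swapE (x : {ffun 'I_n -> V}) (i j : 'I_n) : swap x i j = [ffun k => x (tperm i j k)].
Proof. by apply/ffunP => k; rewrite !ffunE permE /=; case: eqVneq => // _; case: eqVneq. Qed.

Lemma swap_applyN S (x : {ffun 'I_n -> V}) (i j : 'I_n) :
  swap (applyN N S x) i j = applyN N (tperm i j @^-1: S) (swap x i j).
Proof. by apply/ffunP => k; rewrite !swapE !ffunE inE. Qed.

Section Skew.
Variables (d : 'I_n -> Γ) (x : {ffun 'I_n -> V}) (x_homog : forall k, x k \in G (d k)).
Variables (i j : 'I_n) (j_succ_i : nat_of_ord j = (nat_of_ord i).+1).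

Lemma brN_skew m : brN N br m x = - (eps (d i) (d j) *: brN N br m (swap x i j)).
Proof.
elim: m => [|m IHm] /=; first exact: br_skew.
have preim_inj : injective (fun S : {set 'I_n} => tperm i j @^-1: S).
  apply: (@can_inj _ _ _ (fun S : {set 'I_n} => tperm i j @^-1: S)) => S.
  by apply/setP => k; rewrite !inE tpermK.
rewrite IHm linearN linearZZ opprK scalerBr opprB [LHS]addrC; congr (_ + _).
rewrite [in RHS](reindex_inj preim_inj) /= scaler_sumr -sumrN.
apply: eq_big => [S|S _]; first by rewrite card_preimset //; apply: perm_inj.
by rewrite -swap_applyN; apply: br_skew j_succ_i => k; apply: applyN_homog.
Qed.

Lemma deformed_br_skew lam :
  deformed_br N br lam x = - (eps (d i) (d j) *: deformed_br N br lam (swap x i j)).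
Proof.
rewrite /deformed_br (br_skew x_homog j_succ_i) scalerDr opprD scaler_sumr -sumrN.
congr (_ + _); apply: eq_bigr => m _.
by rewrite (brN_skew m) scalerN !scalerA mulrC.
Qed.

End Skew.
End Grading.

Section Deformation.
Variables (K : fieldType) (Γ : zmodType) (V : lmodType K) (n : nat).
Variables (eps : Γ -> Γ -> K) (alpha N : {linear V -> V}).

Lemma Tl_alpha lam : (forall v, N (alpha v) = alpha (N v)) ->
  forall v, Tl N lam (alpha v) = alpha (Tl N lam v).
Proof. by move=> N_alpha v; rewrite /Tl N_alpha linearD linearZZ. Qed.

Lemma fmap_catl (f : V -> V) (x : {ffun 'I_n.-1 -> V}) z :
  fmap f (catl x z) = catl (fmap f x) (f z).
Proof. by apply/ffunP => k; rewrite !ffunE; case: insub => [k'|]; rewrite ?ffunE. Qed.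

Lemma fmap_upd (f : V -> V) (y : {ffun 'I_n -> V}) i w :
  fmap f (upd y i w) = upd (fmap f y) i (f w).
Proof. by apply/ffunP => k; rewrite !ffunE; case: eqP. Qed.

Lemma catl_upd_last (x : {ffun 'I_n.-1 -> V}) z z' (i : 'I_n) : nat_of_ord i = n.-1 ->
  catl x z = upd (catl x z') i z.
Proof.
move=> i_last; apply/ffunP => k; rewrite !ffunE; case: eqVneq => [->|ki].
  by rewrite insubN // i_last ltnn.
case: insubP => [//|]; rewrite -ltnNge ltnS => k_ge; case/eqP: ki; apply: val_inj.
have n_gt0 : (0 < n)%N := leq_ltn_trans (leq0n k) (ltn_ord k).
by apply/eqP; rewrite /= i_last eqn_leq k_ge andbT -ltnS prednK.
Qed.

Definition jacobiator (B : {ffun 'I_n -> V} -> V) (dx : 'I_n.-1 -> Γ) (dy : 'I_n -> Γ)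
    (x : {ffun 'I_n.-1 -> V}) (y : {ffun 'I_n -> V}) : V :=
  B (catl (fmap alpha x) (B y)) -
  \sum_(i < n) eps (\sum_(k < n.-1) dx k) (\sum_(k < n | (k < i)%N) dy k)
     *: B (upd (fmap alpha y) i (B (catl x (y i)))).

Variables (br : {ffun 'I_n -> V} -> V) (br_ml : multilinear br).

Lemma polyfun_deformed_br y : polyfun (fun mu => deformed_br N br mu y).
Proof.
apply: polyfunD; first exact: polyfun_cst.
by apply: polyfun_sum => j; apply: polyfun_mulXn; apply: polyfun_cst.
Qed.

Lemma polyfun_jacobiator (n_gt0 : (0 < n)%N) dx dy x y :
  polyfun (fun mu => jacobiator (deformed_br N br mu) dx dy x y).
Proof.
have last_idx : (n.-1 < n)%N by rewrite prednK.
apply: polyfunB.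
  apply: polyfun_ext (polyfun_deformed_br_upd N br_ml (catl (fmap alpha x) 0)
                        (Ordinal last_idx) (polyfun_deformed_br y)) => mu.
  by rewrite -catl_upd_last.
apply: polyfun_sum => i; apply: polyfunZ.
by apply: polyfun_deformed_br_upd => //; apply: polyfun_deformed_br.
Qed.

Hypotheses (N_alpha : forall v, N (alpha v) = alpha (N v))
           (Tl_trivial : forall mu x, Tl N mu (deformed_br N br mu x) = br (fmap (Tl N mu) x)).

Lemma Tl_jacobiator mu dx dy x y :
  Tl N mu (jacobiator (deformed_br N br mu) dx dy x y) =
  jacobiator br dx dy (fmap (Tl N mu) x) (fmap (Tl N mu) y).
Proof.
rewrite /jacobiator linearB linear_sum /= Tl_trivial fmap_catl Tl_trivial.
congr (br (catl _ _) - _).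
  by apply/ffunP => k; rewrite !ffunE Tl_alpha.
apply: eq_bigr => i _; rewrite linearZZ /= Tl_trivial fmap_upd Tl_trivial fmap_catl.
congr (_ *: br (upd _ _ (br (catl _ _)))); first by apply/ffunP => k; rewrite !ffunE Tl_alpha.
by rewrite ffunE.
Qed.

End Deformation.

Lemma deformed_nHomLieColor (K : fieldType) (Γ : zmodType) (V : lmodType K) (n : nat)
    (G : Γ -> {pred V}) (eps : Γ -> Γ -> K) (br : {ffun 'I_n -> V} -> V)
    (alpha N : {linear V -> V}) (lam : K) :
  [pchar K] =i pred0 -> (0 < n)%N ->
  nHomLieColor G eps br alpha -> Nijenhuis G br alpha N ->
  nHomLieColor G eps (deformed_br N br lam) alpha.
Proof.
move=> char0 n_gt0 [bichar graded br_ml alpha_deg0 br_deg0 br_skew br_jacobi].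
move=> [N_deg0 N_alpha N_nijenhuis]; have [G_subspace _ _] := graded.
have Tl_trivial := deformed_br_trivial br_ml n_gt0 N_nijenhuis.
split=> //.
- exact: multilinear_deformed_br.
- by move=> d x x_homog; exact: (deformed_br_homog G_subspace N_deg0 br_deg0 x_homog lam).
- move=> d x i j x_homog j_succ_i.
  exact: (deformed_br_skew N_deg0 br_skew x_homog j_succ_i lam).
move=> dx dy x y x_homog y_homog; apply/eqP; rewrite -subr_eq0; apply/eqP.
have poly_jac := polyfun_jacobiator eps alpha N br_ml n_gt0 dx dy x y.
apply: (Tl_polyfun_eq0 (N := N) char0 poly_jac) => mu.
rewrite Tl_jacobiator //; apply/eqP; rewrite subr_eq0; apply/eqP.
by apply: br_jacobi => k; rewrite ffunE; apply: Tl_deg0.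
Qed.

Theorem theorem6p3 (K : fieldType) (Γ : zmodType) (V : lmodType K) (n : nat)
    (G : Γ -> {pred V}) (eps : Γ -> Γ -> K) (br : {ffun 'I_n -> V} -> V)
    (alpha N : {linear V -> V}) :
  [pchar K] =i pred0 -> (2 <= n)%N ->
  nHomLieColor G eps br alpha -> Nijenhuis G br alpha N ->
  forall lambda : K,
    [/\ nHomLieColor G eps (deformed_br N br lambda) alpha,
        (forall v : V, Tl N lambda (alpha v) = alpha (Tl N lambda v))
      & (forall x : {ffun 'I_n -> V},
           Tl N lambda (deformed_br N br lambda x) = br (fmap (Tl N lambda) x))].
Proof.
move=> char0 n_ge2 hlc nij lambda; have n_gt0 : (0 < n)%N := ltnW n_ge2.
have [_ N_alpha N_nijenhuis] := nij.
split; first exact: deformed_nHomLieColor.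
- exact: Tl_alpha.
- exact: deformed_br_trivial (hlc_multilinear hlc) n_gt0 N_nijenhuis lambda.
Qed.
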